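(* Fix a number $x$ (real or complex). For a real parameter $\alpha$, say a sequence $(u_n)_{n\ge0}$ satisfies (RE($\alpha$)) if $(n+\alpha)u_{n+1}=2xn\,u_n-(n-\alpha)u_{n-1}$ for all $n\ge1$ (and a sequence $(w_n)_{n\ge1}$ satisfies it for $n\ge2$ if the same identity holds for all $n\ge2$). If $(u_n)_{n\ge0}$ satisfies $(n+\tfrac12)u_{n+1}=2xn\,u_n-(n-\tfrac12)u_{n-1}$ for all $n\ge1$, and $\hat u_n=\frac1n\,(u_{n+1}-u_{n-1})$ for $n\ge1$, then $(n+\tfrac32)\hat u_{n+1}=2xn\,\hat u_n-(n-\tfrac32)\hat u_{n-1}$ for all $n\ge2$. *)

From mathcomp Require Import all_boot all_order all_algebra.
Set Implicit Arguments. Unset Strict Implicit. Unset Printing Implicit Defensive.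
Import Order.TTheory GRing.Theory Num.Theory.
Local Open Scope ring_scope.

Definition RE (R : numFieldType) (x alpha : R) (u : nat -> R) (n0 : nat) : Prop :=
  forall n : nat, (n0 <= n)%N ->
    (n%:R + alpha) * u n.+1 = 2 * x * n%:R * u n - (n%:R - alpha) * u n.-1.

Definition uhat (R : numFieldType) (u : nat -> R) (n : nat) : R :=
  (u n.+1 - u n.-1) / n%:R.

From mathcomp Require Import all_boot all_order all_algebra.
From mathcomp Require Import ring.
Set Implicit Arguments. Unset Strict Implicit. Unset Printing Implicit Defensive.
Import Order.TTheory GRing.Theory Num.Theory.
Local Open Scope ring_scope.

(* The two neighbouring instances of (RE(alpha)) at n - 1 and n + 1 express
   (n + alpha + 1) hat u_{n+1} and (n - alpha - 1) hat u_{n-1} through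
   2 x u_{n+1}, 2 x u_{n-1} and 2 u_n; the u_n terms cancel and what remains is
   2 x (u_{n+1} - u_{n-1}) = 2 x n hat u_n.  So hat u satisfies (RE(alpha + 1)),
   for any alpha.  The shift needs (RE(alpha)) from n = 1 on: hat u_0 is the
   junk value (u_1 - u_0) / 0 = 0. *)

Lemma natr_mul_uhat (R : numFieldType) (u : nat -> R) (k : nat) :
  (0 < k)%N -> k%:R * uhat u k = u k.+1 - u k.-1.
Proof. by move=> k_gt0; rewrite /uhat mulrC divfK // pnatr_eq0 -lt0n. Qed.

Section UhatRecurrence.

Variables (R : numFieldType) (x alpha : R) (u : nat -> R) (n0 : nat).
Hypothesis REu : RE x alpha u n0.+1.

Lemma RE_uhatDl (k : nat) : (n0 < k)%N ->
  (k%:R + alpha) * uhat u k = 2 * x * u k - 2 * u k.-1.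
Proof.
move=> lt_n0k; have k_gt0 : (0 < k)%N by apply: leq_ltn_trans lt_n0k.
apply: (mulfI (_ : k%:R != 0)); first by rewrite pnatr_eq0 -lt0n.
by rewrite mulrCA natr_mul_uhat // mulrBr REu //; ring.
Qed.

Lemma RE_uhatBl (k : nat) : (n0 < k)%N ->
  (k%:R - alpha) * uhat u k = 2 * u k.+1 - 2 * x * u k.
Proof.
move=> lt_n0k; have k_gt0 : (0 < k)%N by apply: leq_ltn_trans lt_n0k.
apply: (mulfI (_ : k%:R != 0)); first by rewrite pnatr_eq0 -lt0n.
rewrite mulrCA natr_mul_uhat // mulrBr.
have -> : (k%:R - alpha) * u k.-1 = 2 * x * k%:R * u k - (k%:R + alpha) * u k.+1.
  by rewrite REu //; ring.
ring.
Qed.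

Lemma RE_uhat : RE x (alpha + 1) (uhat u) n0.+2.
Proof.
move=> [|[|n]] // /[!ltnS] le_n0n.
have -> : n.+2%:R + (alpha + 1) = n.+3%:R + alpha by rewrite [n.+3%:R]mulrSr; ring.
have -> : n.+2%:R - (alpha + 1) = n.+1%:R - alpha by rewrite [n.+2%:R]mulrSr; ring.
rewrite (@RE_uhatDl n.+3 (leqW (leqW le_n0n))) (@RE_uhatBl n.+1 le_n0n).
by rewrite -[2 * x * _ * _]mulrA natr_mul_uhat //=; ring.
Qed.

End UhatRecurrence.

Theorem theorem1 (R : numFieldType) (x : R) (u : nat -> R) :
  RE x (1 / 2) u 1 -> RE x (3 / 2) (uhat u) 2.
Proof.
move=> REu; have := RE_uhat REu.
by have -> : 1 / 2 + 1 = 3 / 2 :> R by field.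
Qed.
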